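(* Let $1\le k\le n-2$ and let $\Sigma=\mathbb{S}^k\times\mathbb{R}^{n-k}\subset\mathbb{R}^{n+1}$ be a self-shrinker, with $r=|\vec x|$ where $\vec x$ are Euclidean coordinates on the $\mathbb{R}^{n-k}$ factor. Then both regions $\{r<\sqrt{2(n-k)}\}$ and $\{r>\sqrt{2(n-k)}\}$ are stable, and $\{r=\sqrt{2(n-k)}\}$ is the unique rotationally symmetric hypersurface of the form $\{r=C\}$, $C>0$, that splits $\Sigma$ into two stable regions $\{r<C\}$ and $\{r>C\}$.
   Context: $\mathbb{S}^k$ is the round sphere of radius $\sqrt{2k}$ centered at the origin of $\mathbb{R}^{k+1}$. Stability operator: $Lf=\Delta f-\tfrac12\langle\vec x,\nabla f\rangle+(|A|^2+\tfrac12)f$. A region $\Omega$ is stable if there exists a function $u$ with $Lu=0$ and $u>0$ on $\Omega$. *)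

From Stdlib Require Import Reals Lra Lia.
Open Scope R_scope.

(* Points of R^{n+1} are represented as functions nat -> R; only the
   coordinates 0..n are meaningful.  For the cylinder
   Sigma = S^k x R^{n-k}, coordinates 0..k are the sphere factor
   (y in R^{k+1}, |y| = sqrt(2k)) and coordinates k+1..n are the
   R^{n-k} factor (x). *)

Fixpoint rsum (N : nat) (f : nat -> R) : R :=
  match N with
  | O => 0
  | S N' => rsum N' f + f N'
  end.

Definition upd (p : nat -> R) (i : nat) (t : R) : nat -> R :=
  fun j => if Nat.eqb j i then t else p j.

Definition rho (k : nat) : R := sqrt (2 * INR k).

Definition ysq (k : nat) (p : nat -> R) : R := rsum (S k) (fun i => p i ^ 2).

Definition rflat (k n : nat) (p : nat -> R) : R :=
  sqrt (rsum (n - k) (fun j => p (S k + j)%nat ^ 2)).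

Definition on_cyl (k : nat) (p : nat -> R) : Prop := ysq k p = 2 * INR k.

(* Extension of a function u on Sigma to the open set {y <> 0} of R^{n+1},
   homogeneous of degree 0 in y: ext u (y,x) = u (rho k * y/|y|, x).
   It only uses the values of u at (canonical) points of Sigma
   (coordinates beyond n are set to 0).  Its Euclidean Laplacian at a
   point of Sigma is the Laplacian of Sigma applied to u. *)
Definition ext (k n : nat) (u : (nat -> R) -> R) (p : nat -> R) : R :=
  u (fun i => if Nat.leb i k then rho k / sqrt (ysq k p) * p i
              else if Nat.leb i n then p i else 0).

Definition is_C2_on (N : nat) (U : (nat -> R) -> Prop) (F : (nat -> R) -> R)
  (D1 : nat -> (nat -> R) -> R) (D2 : nat -> nat -> (nat -> R) -> R) : Prop :=
  (forall p, U p -> forall i, (i < N)%nat ->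
     derivable_pt_lim (fun t => F (upd p i t)) (p i) (D1 i p)) /\
  (forall p, U p -> forall i j, (i < N)%nat -> (j < N)%nat ->
     derivable_pt_lim (fun t => D1 i (upd p j t)) (p j) (D2 i j p)) /\
  (forall p, U p -> forall i j, (i < N)%nat -> (j < N)%nat ->
     forall eps, 0 < eps -> exists delta, 0 < delta /\
       forall q, U q -> (forall l, (l < N)%nat -> Rabs (q l - p l) < delta) ->
         Rabs (D2 i j q - D2 i j p) < eps).

(* |A|^2 on Sigma: k principal curvatures equal to 1/rho k, the others 0 *)
Definition A2 (k : nat) : R := INR k / (rho k) ^ 2.

(* The stability operator L u = Delta u - 1/2 <X, grad u> + (|A|^2 + 1/2) u
   at a point p of Sigma, computed from the degree-0 extension F = ext u
   with partials D1, D2 (X = position vector in R^{n+1}; the sphere part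
   of <X, grad F> vanishes by homogeneity). *)
Definition stab_op (k n : nat) (F : (nat -> R) -> R)
  (D1 : nat -> (nat -> R) -> R) (D2 : nat -> nat -> (nat -> R) -> R)
  (p : nat -> R) : R :=
  rsum (S n) (fun i => D2 i i p)
  - / 2 * rsum (S n) (fun i => p i * D1 i p)
  + (A2 k + / 2) * F p.

Definition stable_region (k n : nat) (Pr : R -> Prop) : Prop :=
  exists (u : (nat -> R) -> R) D1 D2,
    is_C2_on (S n) (fun p => 0 < ysq k p /\ Pr (rflat k n p)) (ext k n u) D1 D2 /\
    (forall p, on_cyl k p -> Pr (rflat k n p) ->
       0 < ext k n u p /\ stab_op k n (ext k n u) D1 D2 p = 0).

(* On the cylinder |A|^2 = 1/2, so L = Delta - <x, grad>/2 + 1 and L kills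
   |x|^2 - 2(n-k): its sign gives a positive Jacobi field on each side of the
   critical radius.  If C differs from the critical radius, the side containing
   the critical cylinder carries a radial function phi = h(|x|^2), positive only
   on a compact shell, with L phi > 0 where phi > 0.  A positive solution u of
   L u = 0 there is impossible: at a maximum point of phi / u on the shell,
   M u - phi (M the maximum) has a local minimum 0, so the first derivatives
   agree and the second derivatives compare, whence L phi <= M L u = 0. *)

From Stdlib Require Import Reals Lra Lia FunctionalExtensionality Bool.
From mathcomp Require all_boot all_order all_algebra.
From mathcomp Require all_classical all_reals all_analysis Rstruct Rstruct_topology.

Module ExtremeValue.
Import HB.structures.
Import all_boot all_order all_algebra.
Import all_classical all_reals all_analysis Rstruct Rstruct_topology.
Import Order.TTheory GRing.Theory Num.Theory.
Import numFieldNormedType.Exports.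
Local Open Scope classical_set_scope.
Local Open Scope ring_scope.

(* Points of R^(N+1) are coded as functions [nat -> R] vanishing from index
   [N+1] on; compactness is imported from the row vectors of MathComp. *)
Lemma extreme_value_box (N : nat) (K : (nat -> R) -> Prop) (f : (nat -> R) -> R) (B : R) :
  (exists p0, K p0) ->
  (forall p, K p -> forall i, Peano.lt i (S N) -> Rle (Rabs (p i)) B) ->
  (forall p, K p -> forall i, Peano.le (S N) i -> p i = R0) ->
  (forall p, (forall i, Peano.le (S N) i -> p i = R0) ->
     (forall eps, Rlt R0 eps -> exists q, K q /\
        forall i, Peano.lt i (S N) -> Rlt (Rabs (Rminus (q i) (p i))) eps) -> K p) ->
  (forall p, K p -> forall eps, Rlt R0 eps -> exists delta, Rlt R0 delta /\
     forall q, K q -> (forall i, Peano.lt i (S N) -> Rlt (Rabs (Rminus (q i) (p i))) delta) ->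
       Rlt (Rabs (Rminus (f q) (f p))) eps) ->
  exists c, K c /\ forall p, K p -> Rle (f p) (f c).
Proof.
move=> [p0 Kp0] Kb Kz Kcl fc.
pose emb (v : 'rV[R]_N.+1) : nat -> R := fun i => if (i <= N)%N then v ord0 (inord i) else 0.
pose row_of (p : nat -> R) : 'rV[R]_N.+1 := \row_(i < N.+1) p i.
have ballE (x y : R) e : ball x e y <-> Rabs (x - y)%R < e by rewrite /ball.
have zero_out p : K p -> forall i, (N < i)%N -> p i = 0 by move=> Kp i /ssrnat.ltP; exact: Kz.
have embK p : (forall i, (N < i)%N -> p i = 0) -> emb (row_of p) = p.
  move=> Hp; apply: funext => i; rewrite /emb.
  case: ifP => Hi; first by rewrite mxE inordK.
  by rewrite Hp // ltnNge Hi.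
have embv v (i : 'I_N.+1) : emb v i = v ord0 i by rewrite /emb -ltnS ltn_ord inord_val.
have near_emb v w (i : nat) e : ball v e w -> (i <= N)%N -> Rlt (Rabs (Rminus (emb w i) (emb v i))) e.
  move=> [_ /(_ ord0 (inord i))]; rewrite ballE /emb => + ->.
  move/RltP; rewrite -Rabs_Ropp; congr (Rlt _ _); congr Rabs.
  rewrite /GRing.add /GRing.opp /=; lra.
pose A := [set v : 'rV[R]_N.+1 | K (emb v)].
have clA : closed A.
  move=> v clv; rewrite /A /=; apply: Kcl => [i /ssrnat.leP|eps eps0].
    by rewrite /emb ltnNge => /negbTE ->.
  have /RltP eps0' := eps0.
  have [q [Aq bq]] := clv _ (nbhsx_ballx v eps eps0').
  by exists (emb q); split => // i /ssrnat.ltP; rewrite ltnS; exact: near_emb.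
have cA : compact A.
  apply: (subclosed_compact clA);
    first (apply: (@rV_compact _ _ (fun=> `[(- B)%R, B]%classic)) => i; exact: segment_compact).
  move=> v Av i /=; rewrite in_itv /=.
  have := Kb _ Av i (ssrnat.ltP (ltn_ord i)); rewrite embv => Hv.
  have [H1 H2] : Rle (Ropp B) (v ord0 i) /\ Rle (v ord0 i) B.
    split; last exact: Rle_trans (Rle_abs _) Hv.
    by apply: Ropp_le_cancel; rewrite Ropp_involutive; apply: Rle_trans (Rle_abs _) _; rewrite Rabs_Ropp.
  by apply/andP; split; apply/RleP.
have cf : {within A, continuous (fun v => f (emb v))}.
  apply/subspace_continuousP => v Av.
  rewrite /from_subspace; apply/(@cvgrPdist_lt _ R^o) => e /RltP e0.
  have [d [/RltP d0 Hd]] := fc _ Av e e0.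
  apply: (filterS _ (nbhsx_ballx v d d0)) => w bw Aw.
  have : Rlt (Rabs (Rminus (f (emb w)) (f (emb v)))) e.
    by apply: Hd => // i /ssrnat.ltP; rewrite ltnS; exact: near_emb.
  move/RltP; rewrite -Rabs_Ropp; congr (_ < _).
  by rewrite /GRing.add /GRing.opp /= /Num.norm /=; congr Rabs; lra.
have A0 : A !=set0 by exists (row_of p0); rewrite /A /= embK //; exact: zero_out.
have [c Ac Hc] := compact_EVT_max A0 cA cf.
exists (emb c); split; first by move: Ac; rewrite inE.
move=> p Kp; rewrite -(embK p (zero_out _ Kp)); apply/RleP; apply: Hc.
by rewrite inE /A /= embK //; exact: zero_out.
Qed.

End ExtremeValue.

Open Scope R_scope.

Lemma rsum_ext N f g : (forall j, (j < N)%nat -> f j = g j) -> rsum N f = rsum N g.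
Proof.
  induction N; simpl; intros H; auto.
  rewrite IHN by (intros; apply H; lia). rewrite H by lia. reflexivity.
Qed.

Lemma rsum_add a b f : rsum (a + b) f = rsum a f + rsum b (fun j => f (a + j)%nat).
Proof.
  induction b; simpl.
  - rewrite Nat.add_0_r; ring.
  - rewrite Nat.add_succ_r; simpl; rewrite IHb; ring.
Qed.

Lemma rsum_plus N f g : rsum N (fun j => f j + g j) = rsum N f + rsum N g.
Proof. induction N; simpl; [ring | rewrite IHN; ring]. Qed.

Lemma rsum_scal N c f : rsum N (fun j => c * f j) = c * rsum N f.
Proof. induction N; simpl; [ring | rewrite IHN; ring]. Qed.

Lemma rsum_const N c : rsum N (fun _ => c) = INR N * c.
Proof. induction N; cbn [rsum]; [simpl; ring | rewrite IHN, S_INR; ring]. Qed.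

Lemma rsum_zero N f : (forall j, (j < N)%nat -> f j = 0) -> rsum N f = 0.
Proof. intros H. rewrite (rsum_ext N f (fun _ => 0)), rsum_const by auto. ring. Qed.

Lemma rsum_le N f g : (forall j, (j < N)%nat -> f j <= g j) -> rsum N f <= rsum N g.
Proof.
  induction N; simpl; intros H; [lra |].
  assert (rsum N f <= rsum N g) by (apply IHN; intros; apply H; lia).
  assert (f N <= g N) by (apply H; lia). lra.
Qed.

Lemma rsum_nonneg N f : (forall j, (j < N)%nat -> 0 <= f j) -> 0 <= rsum N f.
Proof. intros H. rewrite <- (rsum_zero N (fun _ => 0)) by auto. apply rsum_le; auto. Qed.

Lemma rsum_le_const N f c : (forall j, (j < N)%nat -> f j <= c) -> rsum N f <= INR N * c.
Proof. intros H. rewrite <- rsum_const. apply rsum_le; auto. Qed.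

Lemma rsum_term N f j0 :
  (forall j, (j < N)%nat -> 0 <= f j) -> (j0 < N)%nat -> f j0 <= rsum N f.
Proof.
  induction N; simpl; intros H Hj; [lia |].
  assert (0 <= rsum N f) by (apply rsum_nonneg; intros; apply H; lia).
  destruct (Nat.eq_dec j0 N) as [-> | Hne]; [lra |].
  assert (f j0 <= rsum N f) by (apply IHN; [intros; apply H | ]; lia).
  assert (0 <= f N) by (apply H; lia). lra.
Qed.

Lemma rsum_upd_sq M o p i t :
  rsum M (fun j => upd p i t (o + j)%nat ^ 2) =
  rsum M (fun j => p (o + j)%nat ^ 2) +
  (if andb (o <=? i)%nat (i <? o + M)%nat then t ^ 2 - p i ^ 2 else 0).
Proof.
  induction M; cbn [rsum].
  - replace (andb (o <=? i)%nat (i <? o + 0)%nat) with false; [ring |].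
    symmetry; apply andb_false_iff; destruct (Nat.leb_spec o i); [right | left]; auto.
    apply Nat.ltb_ge; lia.
  - rewrite IHM. unfold upd at 1.
    destruct (Nat.eqb_spec (o + M) i) as [<- | Hi].
    + destruct (Nat.ltb_spec (o + M) (o + M)), (Nat.ltb_spec (o + M) (o + S M)); [lia | lia | | lia].
      replace (o <=? o + M)%nat with true by (symmetry; apply Nat.leb_le; lia).
      simpl; ring.
    + destruct (Nat.leb_spec o i), (Nat.ltb_spec i (o + M)), (Nat.ltb_spec i (o + S M));
        simpl; try ring; lia.
Qed.

Lemma upd_same p i : upd p i (p i) = p.
Proof.
  apply functional_extensionality; intros j; unfold upd.
  destruct (Nat.eqb_spec j i); subst; auto.
Qed.

Lemma upd_upd p i s t : upd (upd p i s) i t = upd p i t.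
Proof.
  apply functional_extensionality; intros j; unfold upd.
  destruct (Nat.eqb_spec j i); auto.
Qed.

Lemma upd_eq p i t : upd p i t i = t.
Proof. unfold upd; rewrite Nat.eqb_refl; auto. Qed.

Lemma derivable_pt_lim_quartic (f : R -> R) (a b c d e x l : R) :
  (forall t, f t = a * t ^ 4 + b * t ^ 3 + c * t ^ 2 + d * t + e) ->
  l = 4 * a * x ^ 3 + 3 * b * x ^ 2 + 2 * c * x + d ->
  derivable_pt_lim f x l.
Proof.
  intros Hf ->.
  pose proof (fun m c => derivable_pt_lim_scal _ c _ _ (derivable_pt_lim_pow x m)) as Hmon.
  pose proof (derivable_pt_lim_plus _ _ _ _ _
    (derivable_pt_lim_plus _ _ _ _ _
      (derivable_pt_lim_plus _ _ _ _ _
        (derivable_pt_lim_plus _ _ _ _ _ (Hmon 4%nat a) (Hmon 3%nat b)) (Hmon 2%nat c))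
      (Hmon 1%nat d)) (derivable_pt_lim_const e x)) as H.
  replace (4 * a * x ^ 3 + 3 * b * x ^ 2 + 2 * c * x + d) with
    (a * (INR 4 * x ^ 3) + b * (INR 3 * x ^ 2) + c * (INR 2 * x ^ 1) + d * (INR 1 * x ^ 0) + 0)
    by (simpl; ring).
  eapply derivable_pt_lim_ext; [| exact H].
  intros t; rewrite Hf; unfold plus_fct, mult_real_fct, fct_cte; simpl; ring.
Qed.

Definition quad (al be ga s : R) : R := al * s ^ 2 + be * s + ga.

(* [L] applied to [x |-> quad al be ga |x|^2] on the cylinder, as a function
   of [s = |x|^2], where [m = n - k] is the dimension of the flat factor. *)
Definition radial_stab_op (m al be ga s : R) : R :=
  8 * al * s + (2 * m - s) * (2 * al * s + be) + quad al be ga s.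

Section Cylinder.

Variables k n : nat.

Definition rsq (p : nat -> R) : R := rsum (n - k) (fun j => p (S k + j)%nat ^ 2).

Definition flat_coord (i : nat) : bool := andb (k <? i)%nat (i <=? n)%nat.

Definition cyl_proj (q : nat -> R) : nat -> R :=
  fun i => if Nat.leb i k then rho k / sqrt (ysq k q) * q i
           else if Nat.leb i n then q i else 0.

Lemma ext_cyl_proj u p : ext k n u p = u (cyl_proj p).
Proof. reflexivity. Qed.

Lemma rflat_rsq p : rflat k n p = sqrt (rsq p).
Proof. reflexivity. Qed.

Lemma rsq_nonneg p : 0 <= rsq p.
Proof. apply rsum_nonneg; intros; apply pow2_ge_0. Qed.

Lemma rsum_flat (hkn : (k <= n)%nat) g :
  rsum (S n) (fun i => if flat_coord i then g i else 0) = rsum (n - k) (fun j => g (S k + j)%nat).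
Proof.
  replace (S n) with (S k + (n - k))%nat by lia. rewrite rsum_add, rsum_zero, Rplus_0_l.
  - apply rsum_ext; intros j Hj. unfold flat_coord.
    destruct (Nat.ltb_spec k (S k + j)), (Nat.leb_spec (S k + j) n); simpl; auto; lia.
  - intros j Hj; unfold flat_coord. destruct (Nat.ltb_spec k j); simpl; auto; lia.
Qed.

Lemma rsq_upd p i t :
  rsq (upd p i t) = rsq p + (if flat_coord i then t ^ 2 - p i ^ 2 else 0).
Proof.
  unfold rsq. rewrite rsum_upd_sq. f_equal. unfold flat_coord.
  destruct (Nat.leb_spec (S k) i), (Nat.ltb_spec k i), (Nat.ltb_spec i (S k + (n - k))),
    (Nat.leb_spec i n); simpl; auto; lia.
Qed.

Lemma ysq_upd p i t :
  ysq k (upd p i t) = ysq k p + (if (i <=? k)%nat then t ^ 2 - p i ^ 2 else 0).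
Proof.
  exact (rsum_upd_sq (S k) 0 p i t).
Qed.

Lemma rsq_cyl_proj q : rsq (cyl_proj q) = rsq q.
Proof.
  apply rsum_ext; intros j Hj. unfold cyl_proj.
  destruct (Nat.leb_spec (S k + j) k), (Nat.leb_spec (S k + j) n); auto; lia.
Qed.

Lemma rho_sq : rho k ^ 2 = 2 * INR k.
Proof. unfold rho. rewrite pow2_sqrt; auto. apply Rmult_le_pos; [lra | apply pos_INR]. Qed.

Lemma rho_pos (hk : (1 <= k)%nat) : 0 < rho k.
Proof. unfold rho; apply sqrt_lt_R0. assert (1 <= INR k) by (apply (le_INR 1); auto). lra. Qed.

Lemma ysq_cyl_proj q : 0 < ysq k q -> ysq k (cyl_proj q) = 2 * INR k.
Proof.
  intros Hy. unfold ysq at 1.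
  rewrite (rsum_ext _ _ (fun i => (rho k / sqrt (ysq k q)) ^ 2 * q i ^ 2)).
  - rewrite rsum_scal. fold (ysq k q). unfold Rdiv.
    rewrite Rpow_mult_distr, pow_inv, pow2_sqrt, rho_sq by lra. field. lra.
  - intros i Hi. unfold cyl_proj. destruct (Nat.leb_spec i k); [ring | lia].
Qed.

Lemma cyl_proj_idem (hk : (1 <= k)%nat) q : 0 < ysq k q -> cyl_proj (cyl_proj q) = cyl_proj q.
Proof.
  intros Hy. apply functional_extensionality; intros i.
  unfold cyl_proj at 1. rewrite (ysq_cyl_proj q Hy). fold (rho k).
  unfold cyl_proj. destruct (Nat.leb_spec i k); [| destruct (Nat.leb_spec i n); auto].
  assert (0 < rho k) by (apply rho_pos; auto).
  assert (0 < sqrt (ysq k q)) by (apply sqrt_lt_R0; auto).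
  field. lra.
Qed.

Lemma ext_cyl_proj_idem (hk : (1 <= k)%nat) u q : 0 < ysq k q -> ext k n u (cyl_proj q) = ext k n u q.
Proof. intros Hy. rewrite !ext_cyl_proj, cyl_proj_idem; auto. Qed.

Lemma A2_half (hk : (1 <= k)%nat) : A2 k = / 2.
Proof.
  unfold A2. rewrite rho_sq. assert (1 <= INR k) by (apply (le_INR 1); auto). field. lra.
Qed.

Lemma cyl_point_of_rsq s : (k < n)%nat -> 0 <= s ->
  exists p, on_cyl k p /\ (forall i, (n < i)%nat -> p i = 0) /\ rsq p = s.
Proof.
  intros Hlt Hs. exists (upd (upd (fun _ => 0) 0 (rho k)) (S k) (sqrt s)).
  split; [| split].
  - unfold on_cyl. rewrite !ysq_upd. unfold ysq. rewrite rsum_zero by (intros; simpl; ring).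
    destruct (Nat.leb_spec (S k) k), (Nat.leb_spec 0 k); try lia.
    unfold upd; simpl. rewrite <- rho_sq. ring.
  - intros i Hi. unfold upd. destruct (Nat.eqb_spec i (S k)), (Nat.eqb_spec i 0); auto; lia.
  - rewrite !rsq_upd. unfold rsq. rewrite rsum_zero by (intros; simpl; ring).
    unfold flat_coord. destruct (Nat.ltb_spec k (S k)), (Nat.leb_spec (S k) n), (Nat.ltb_spec k 0);
      try lia.
    unfold upd; simpl. transitivity (sqrt s * sqrt s); [ring | apply sqrt_sqrt; auto].
Qed.

Definition radial (al be ga : R) (q : nat -> R) : R := quad al be ga (rsq q).

Definition radial_d1 (al be : R) (i : nat) (q : nat -> R) : R :=
  if flat_coord i then 2 * q i * (2 * al * rsq q + be) else 0.

Definition radial_d2 (al be : R) (i j : nat) (q : nat -> R) : R :=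
  if andb (flat_coord i) (flat_coord j)
  then 8 * al * q i * q j + (if (i =? j)%nat then 2 * (2 * al * rsq q + be) else 0)
  else 0.

Lemma radial_d1_spec al be ga q i :
  derivable_pt_lim (fun t => radial al be ga (upd q i t)) (q i) (radial_d1 al be i q).
Proof.
  unfold radial, radial_d1, quad. set (X := rsq q - q i ^ 2).
  destruct (flat_coord i) eqn:Hi.
  - apply (derivable_pt_lim_quartic _ al 0 (2 * al * X + be) 0 (al * X ^ 2 + be * X + ga)).
    + intros t. rewrite rsq_upd, Hi. unfold X. ring.
    + unfold X. ring.
  - apply (derivable_pt_lim_quartic _ 0 0 0 0 (al * rsq q ^ 2 + be * rsq q + ga)).
    + intros t. rewrite rsq_upd, Hi. ring.
    + ring.
Qed.

Lemma radial_d2_spec al be q i j :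
  derivable_pt_lim (fun t => radial_d1 al be i (upd q j t)) (q j) (radial_d2 al be i j q).
Proof.
  unfold radial_d1, radial_d2. set (X := rsq q - q j ^ 2).
  destruct (flat_coord i) eqn:Hi; [| apply (derivable_pt_lim_quartic _ 0 0 0 0 0); intros; simpl; ring].
  destruct (Nat.eqb_spec i j) as [<- | Hij].
  - rewrite Hi. simpl.
    apply (derivable_pt_lim_quartic _ 0 (4 * al) 0 (2 * (2 * al * X + be)) 0).
    + intros t. rewrite rsq_upd, Hi, upd_eq. unfold X. ring.
    + unfold X. ring.
  - assert (Hq : forall t, upd q j t i = q i)
      by (intros t; unfold upd; destruct (Nat.eqb_spec i j); [contradiction | auto]).
    destruct (flat_coord j) eqn:Hj; simpl.
    + apply (derivable_pt_lim_quartic _ 0 0 (4 * al * q i) 0 (2 * q i * (2 * al * X + be))).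
      * intros t. rewrite rsq_upd, Hj, Hq. unfold X. ring.
      * ring.
    + apply (derivable_pt_lim_quartic _ 0 0 0 0 (2 * q i * (2 * al * rsq q + be))).
      * intros t. rewrite rsq_upd, Hj, Hq. ring.
      * ring.
Qed.

Lemma stab_op_radial (hk : (1 <= k)%nat) (hkn : (k <= n)%nat) al be ga p :
  stab_op k n (radial al be ga) (radial_d1 al be) (radial_d2 al be) p =
  radial_stab_op (INR (n - k)) al be ga (rsq p).
Proof.
  unfold stab_op, radial_stab_op, radial. rewrite A2_half by auto.
  rewrite (rsum_ext _ _ (fun i => if flat_coord i then 8 * al * p i ^ 2 + 2 * (2 * al * rsq p + be) else 0)).
  2: { intros i _. unfold radial_d2. rewrite Nat.eqb_refl. destruct (flat_coord i); simpl; ring. }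
  rewrite (rsum_ext _ (fun i => p i * radial_d1 al be i p) (fun i => if flat_coord i then (2 * (2 * al * rsq p + be)) * p i ^ 2 else 0)).
  2: { intros i _. unfold radial_d1. destruct (flat_coord i); ring. }
  rewrite !rsum_flat, rsum_plus, !rsum_scal, rsum_const by auto. fold (rsq p). field.
Qed.

End Cylinder.

Lemma ext_radial k n al be ga : ext k n (radial k n al be ga) = radial k n al be ga.
Proof.
  apply functional_extensionality; intros p.
  rewrite ext_cyl_proj. unfold radial. rewrite rsq_cyl_proj. reflexivity.
Qed.

Lemma affine_radial_C2 k n N U be ga :
  is_C2_on N U (radial k n 0 be ga) (radial_d1 k n 0 be) (radial_d2 k n 0 be).
Proof.
  split; [| split].
  - intros; apply radial_d1_spec.
  - intros; apply radial_d2_spec.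
  - intros p _ i j _ _ eps Heps. exists 1. split; [lra |]. intros q _ _.
    replace (radial_d2 k n 0 be i j q) with (radial_d2 k n 0 be i j p).
    + rewrite Rminus_diag, Rabs_R0; auto.
    + unfold radial_d2. destruct (andb _ _); [destruct (i =? j)%nat |]; ring.
Qed.

Lemma stable_region_affine k n be (Pr : R -> Prop) :
  (1 <= k)%nat -> (k <= n)%nat ->
  (forall s, 0 <= s -> Pr (sqrt s) -> 0 < be * (s - 2 * INR (n - k))) ->
  stable_region k n Pr.
Proof.
  intros hk hkn Hpos.
  exists (radial k n 0 be (- (2 * INR (n - k) * be))), (radial_d1 k n 0 be), (radial_d2 k n 0 be).
  rewrite ext_radial. split; [apply affine_radial_C2 |].
  intros p _ HPr. rewrite stab_op_radial by auto.
  unfold radial, radial_stab_op, quad. rewrite rflat_rsq in HPr.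
  specialize (Hpos _ (rsq_nonneg k n p) HPr). split; [lra | ring].
Qed.

Lemma local_min_derivatives (g g' : R -> R) x0 d a :
  0 < d -> (forall t, Rabs (t - x0) < d -> 0 <= g t) -> g x0 = 0 ->
  (forall t, Rabs (t - x0) < d -> derivable_pt_lim g t (g' t)) ->
  derivable_pt_lim g' x0 a -> g' x0 = 0 /\ 0 <= a.
Proof.
  intros Hd Hg Hg0 Hder Ha.
  assert (Hx0 : Rabs (x0 - x0) < d) by (rewrite Rminus_diag, Rabs_R0; auto).
  assert (H1 : g' x0 = 0).
  { rewrite <- (derive_pt_eq_0 g x0 (g' x0) (exist _ _ (Hder x0 Hx0))) by auto.
    apply (deriv_minimum g (x0 - d) (x0 + d)); try lra.
    intros x H2 H3. rewrite Hg0. apply Hg. apply Rabs_def1; lra. }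
  split; auto.
  destruct (Rle_or_lt 0 a) as [| Hneg]; auto. exfalso.
  (* g' < 0 just right of x0, so g decreases from g x0 = 0 there *)
  destruct (Ha (- a / 2) ltac:(lra)) as [del Hdel].
  set (h := Rmin del d / 2).
  assert (Hdpos := cond_pos del).
  assert (Hh : 0 < h) by (unfold h; apply Rmin_case; lra).
  assert (Hhd : h < d) by (unfold h; assert (Rmin del d <= d) by apply Rmin_r; lra).
  assert (Hhdel : h < del) by (unfold h; assert (Rmin del d <= del) by apply Rmin_l; lra).
  destruct (MVT_cor2 g g' x0 (x0 + h)) as [c [Hc1 Hc2]]; [lra | |].
  { intros c Hc. apply Hder. apply Rabs_def1; lra. }
  assert (Hgc : g' c < 0).
  { assert (Hs := Hdel (c - x0) ltac:(lra) ltac:(apply Rabs_def1; lra)).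
    replace (x0 + (c - x0)) with c in Hs by ring. rewrite H1 in Hs.
    apply Rabs_def2 in Hs. destruct Hs as [Hs1 Hs2].
    assert (g' c / (c - x0) < 0) by (unfold Rminus in *; lra).
    replace (g' c) with (g' c / (c - x0) * (c - x0)) by (field; lra).
    nra. }
  assert (0 <= g (x0 + h)) by (apply Hg; apply Rabs_def1; lra).
  nra.
Qed.

Lemma mvt_abs_bound (g g' : R -> R) a b B :
  (forall t, Rmin a b <= t <= Rmax a b -> derivable_pt_lim g t (g' t) /\ Rabs (g' t) <= B) ->
  Rabs (g b - g a) <= B * Rabs (b - a).
Proof.
  intros H.
  assert (Hlt : forall x y, x < y -> (forall t, x <= t <= y -> derivable_pt_lim g t (g' t) /\
                Rabs (g' t) <= B) -> Rabs (g y - g x) <= B * Rabs (y - x)).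
  { intros x y Hxy Hd. destruct (MVT_cor2 g g' x y Hxy) as [c [Hc1 Hc2]].
    - intros c Hc; apply Hd; lra.
    - rewrite Hc1, Rabs_mult. apply Rmult_le_compat_r; [apply Rabs_pos | apply Hd; lra]. }
  destruct (Rtotal_order a b) as [Hab | [<- | Hab]].
  - apply Hlt; auto. intros t Ht; apply H. rewrite Rmin_left, Rmax_right; lra.
  - rewrite !Rminus_diag, Rabs_R0, Rmult_0_r. apply Rle_refl.
  - rewrite <- Rabs_Ropp, <- (Rabs_Ropp (b - a)), !Ropp_minus_distr.
    apply Hlt; auto. intros t Ht; apply H. rewrite Rmin_right, Rmax_left; lra.
Qed.

Definition box (N : nat) (p : nat -> R) (r : R) (z : nat -> R) : Prop :=
  (forall l, (N <= l)%nat -> z l = p l) /\ (forall l, (l < N)%nat -> Rabs (z l - p l) <= r).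

Lemma box_center N p r : 0 <= r -> box N p r p.
Proof. split; auto. intros; rewrite Rminus_diag, Rabs_R0; auto. Qed.

Lemma box_mono N p d d' z : box N p d' z -> d' <= d -> box N p d z.
Proof. intros [H1 H2] Hd; split; auto. intros l Hl; specialize (H2 l Hl); lra. Qed.

Lemma box_dist_sum N p d z : box N p d z -> rsum N (fun l => Rabs (z l - p l)) <= INR N * d.
Proof. intros [_ H]; apply rsum_le_const; auto. Qed.

Lemma box_lipschitz N (G : (nat -> R) -> R) (H : nat -> (nat -> R) -> R) p q r B :
  (forall z, box N p r z -> forall j, (j < N)%nat ->
     derivable_pt_lim (fun t => G (upd z j t)) (z j) (H j z) /\ Rabs (H j z) <= B) ->
  box N p r q ->
  Rabs (G q - G p) <= B * rsum N (fun l => Rabs (q l - p l)).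
Proof.
  intros HD [Hq1 Hq2].
  (* move from p to q one coordinate at a time *)
  set (mix := fun J l => if (l <? J)%nat then q l else p l).
  assert (Hmix : forall J, (J <= N)%nat ->
            Rabs (G (mix J) - G p) <= B * rsum J (fun l => Rabs (q l - p l))).
  { induction J; intros HJ.
    - replace (mix 0%nat) with p by (apply functional_extensionality; intros l; destruct l; auto).
      rewrite Rminus_diag, Rabs_R0. simpl. lra.
    - assert (Hm : forall t, upd (mix J) J t = fun l => if (l =? J)%nat then t else mix J l)
        by reflexivity.
      assert (HmS : mix (S J) = upd (mix J) J (q J)).
      { rewrite Hm. apply functional_extensionality; intros l; unfold mix.
        destruct (Nat.eqb_spec l J), (Nat.ltb_spec l (S J)), (Nat.ltb_spec l J);
          subst; auto; lia. }
      assert (HmJ : mix J = upd (mix J) J (p J)).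
      { rewrite Hm. apply functional_extensionality; intros l; unfold mix.
        destruct (Nat.eqb_spec l J), (Nat.ltb_spec l J); subst; auto; lia. }
      assert (Hstep : Rabs (G (upd (mix J) J (q J)) - G (upd (mix J) J (p J))) <=
                      B * Rabs (q J - p J)).
      { apply (mvt_abs_bound (fun t => G (upd (mix J) J t)) (fun t => H J (upd (mix J) J t))).
        intros t Ht.
        assert (Hz : box N p r (upd (mix J) J t)).
        { rewrite Hm. unfold mix. split; intros l Hl.
          - destruct (Nat.eqb_spec l J), (Nat.ltb_spec l J); auto; lia.
          - destruct (Nat.eqb_spec l J) as [-> | HlJ].
            + assert (Rabs (t - p J) <= Rabs (q J - p J)) by (unfold Rmin, Rmax in Ht;
                destruct (Rle_dec (p J) (q J)); unfold Rabs; repeat destruct Rcase_abs; lra).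
              pose proof (Hq2 J Hl). lra.
            + pose proof (Hq2 l Hl). pose proof (Rabs_pos (q l - p l)).
              destruct (Nat.ltb_spec l J); [auto | rewrite Rminus_diag, Rabs_R0; lra]. }
        destruct (HD _ Hz J ltac:(lia)) as [Hd Hb]. rewrite upd_eq in Hd. split; auto.
        eapply derivable_pt_lim_ext; [| exact Hd]. intros s. simpl. rewrite upd_upd. auto. }
      rewrite HmS. cbn [rsum]. rewrite <- HmJ in Hstep. specialize (IHJ ltac:(lia)).
      replace (G (upd (mix J) J (q J)) - G p) with
        (G (upd (mix J) J (q J)) - G (mix J) + (G (mix J) - G p)) by ring.
      pose proof (Rabs_triang (G (upd (mix J) J (q J)) - G (mix J)) (G (mix J) - G p)). lra. }
  assert (HN : mix N = q).
  { apply functional_extensionality; intros l; unfold mix.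
    destruct (Nat.ltb_spec l N); auto. symmetry; apply Hq1; auto. }
  rewrite <- HN at 1. apply Hmix; lia.
Qed.

Lemma finite_min_radius N (P : nat -> R -> Prop) :
  (forall j d d', P j d -> 0 < d' <= d -> P j d') ->
  (forall j, (j < N)%nat -> exists d, 0 < d /\ P j d) ->
  exists d, 0 < d /\ forall j, (j < N)%nat -> P j d.
Proof.
  intros Hm. induction N; intros H.
  - exists 1; split; [lra | intros; lia].
  - destruct IHN as [d1 [Hd1 P1]]; [intros j Hj; apply H; lia |].
    destruct (H N ltac:(lia)) as [d2 [Hd2 P2]].
    exists (Rmin d1 d2). assert (0 < Rmin d1 d2) by (apply Rmin_case; lra).
    split; auto. intros j Hj.
    destruct (Nat.eq_dec j N) as [-> | Hne].
    + apply (Hm _ d2); auto. split; auto; apply Rmin_r.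
    + apply (Hm _ d1); [apply P1; lia |]. split; auto; apply Rmin_l.
Qed.

Section C2Box.

Variables (N : nat) (U : (nat -> R) -> Prop) (F : (nat -> R) -> R).
Variables (D1 : nat -> (nat -> R) -> R) (D2 : nat -> nat -> (nat -> R) -> R).
Variables (p : nat -> R) (r : R).
Hypothesis HC : is_C2_on N U F D1 D2.
Hypothesis Hr : 0 < r.
Hypothesis HU : forall z, box N p r z -> U z.

Lemma C2_second_partials_bounded :
  exists r2 B, 0 < r2 <= r /\ 0 <= B /\
    forall z, box N p r2 z -> forall i j, (i < N)%nat -> (j < N)%nat -> Rabs (D2 i j z) <= B.
Proof.
  destruct HC as [_ [_ HC3]].
  assert (Up : U p) by (apply HU, box_center; lra).
  assert (Hmono : forall (Q : (nat -> R) -> Prop) d d', (forall z, box N p d z -> Q z) ->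
            0 < d' <= d -> forall z, box N p d' z -> Q z)
    by (intros Q d d' HQ Hd z Hz; apply HQ; eapply box_mono; eauto; lra).
  destruct (finite_min_radius N (fun i d => forall z, box N p d z ->
              forall j, (j < N)%nat -> Rabs (D2 i j z - D2 i j p) < 1)) as [d [Hd Pd]].
  { intros i d0 d1; apply (Hmono (fun z => forall j, (j < N)%nat -> Rabs (D2 i j z - D2 i j p) < 1)). }
  { intros i Hi.
    destruct (finite_min_radius N (fun j d => forall z, box N p d z ->
                Rabs (D2 i j z - D2 i j p) < 1)) as [d' [Hd' Pd']].
    { intros j d0 d1; apply (Hmono (fun z => Rabs (D2 i j z - D2 i j p) < 1)). }
    { intros j Hj. destruct (HC3 p Up i j Hi Hj 1 ltac:(lra)) as [dl [Hdl Pdl]].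
      exists (Rmin r (dl / 2)). assert (Rmin r (dl / 2) <= dl / 2) by apply Rmin_r.
      split; [apply Rmin_case; lra |]. intros z Hz. apply Pdl.
      - apply HU. eapply box_mono; eauto. apply Rmin_l.
      - intros l Hl. destruct Hz as [_ Hz]. specialize (Hz l Hl). lra. }
    exists d'; split; [exact Hd' | intros z Hz j Hj; apply Pd'; auto]. }
  set (B := rsum N (fun i => rsum N (fun j => Rabs (D2 i j p) + 1))).
  assert (Hterm : forall i j, 0 <= Rabs (D2 i j p) + 1)
    by (intros i j; pose proof (Rabs_pos (D2 i j p)); lra).
  exists (Rmin d r), B. split; [split; [apply Rmin_case | apply Rmin_r]; lra |].
  split; [apply rsum_nonneg; intros; apply rsum_nonneg; auto |].
  intros z Hz i j Hi Hj.
  assert (Rabs (D2 i j p) + 1 <= B).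
  { apply Rle_trans with (rsum N (fun j => Rabs (D2 i j p) + 1)).
    - apply (rsum_term N (fun j => Rabs (D2 i j p) + 1)); auto.
    - apply (rsum_term N (fun i => rsum N (fun j => Rabs (D2 i j p) + 1))); auto.
      intros; apply rsum_nonneg; auto. }
  assert (Rabs (D2 i j z - D2 i j p) < 1)
    by (apply (Pd i Hi); auto; eapply box_mono; eauto; apply Rmin_l).
  pose proof (Rabs_triang (D2 i j z - D2 i j p) (D2 i j p)).
  replace (D2 i j z - D2 i j p + D2 i j p) with (D2 i j z) in * by ring. lra.
Qed.

Lemma C2_first_partials_bounded :
  exists r1 B, 0 < r1 <= r /\ 0 <= B /\
    forall z, box N p r1 z -> forall i, (i < N)%nat -> Rabs (D1 i z) <= B.
Proof.
  destruct C2_second_partials_bounded as [r2 [B2 [[Hr2 Hr2r] [HB2 PB2]]]].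
  destruct HC as [_ [HC2 _]].
  set (B := rsum N (fun i => Rabs (D1 i p) + B2 * (INR N * r2))).
  assert (Hterm : forall i, 0 <= Rabs (D1 i p) + B2 * (INR N * r2))
    by (intros i; apply Rplus_le_le_0_compat; [apply Rabs_pos |];
        apply Rmult_le_pos; [auto | apply Rmult_le_pos; [apply pos_INR | lra]]).
  exists r2, B. split; [lra | split; [apply rsum_nonneg; auto |]].
  intros z Hz i Hi.
  assert (Hlip : Rabs (D1 i z - D1 i p) <= B2 * rsum N (fun l => Rabs (z l - p l))).
  { apply (box_lipschitz N (D1 i) (D2 i) p z r2 B2); auto.
    intros w Hw j Hj. split; [apply HC2; auto; apply HU; eapply box_mono; eauto |].
    apply PB2; auto. }
  assert (B2 * rsum N (fun l => Rabs (z l - p l)) <= B2 * (INR N * r2))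
    by (apply Rmult_le_compat_l; auto; apply box_dist_sum; auto).
  assert (Rabs (D1 i p) + B2 * (INR N * r2) <= B)
    by (apply (rsum_term N (fun i => Rabs (D1 i p) + B2 * (INR N * r2))); auto).
  pose proof (Rabs_triang (D1 i z - D1 i p) (D1 i p)).
  replace (D1 i z - D1 i p + D1 i p) with (D1 i z) in * by ring. lra.
Qed.

Lemma C2_continuous_box :
  forall eps, 0 < eps -> exists d, 0 < d /\ forall q, box N p d q -> Rabs (F q - F p) < eps.
Proof.
  intros eps Heps.
  destruct C2_first_partials_bounded as [r1 [B [[Hr1 Hr1r] [HB PB]]]].
  destruct HC as [HC1 _].
  pose proof (pos_INR N).
  set (c := B * INR N + 1).
  assert (Hc : 0 < c) by (unfold c; nra).
  set (d := Rmin r1 (eps / (2 * c))).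
  assert (Hd1 : d <= r1) by apply Rmin_l.
  assert (Hd2 : d <= eps / (2 * c)) by apply Rmin_r.
  assert (Hd : 0 < d) by (apply Rmin_case; [lra | apply Rdiv_lt_0_compat; lra]).
  exists d. split; auto. intros q Hq.
  assert (Hlip : Rabs (F q - F p) <= B * rsum N (fun l => Rabs (q l - p l))).
  { apply (box_lipschitz N F D1 p q r1 B); [| eapply box_mono; eauto].
    intros w Hw j Hj. split; [apply HC1; auto; apply HU; eapply box_mono; eauto | apply PB; auto]. }
  assert (B * rsum N (fun l => Rabs (q l - p l)) <= B * (INR N * d))
    by (apply Rmult_le_compat_l; auto; apply box_dist_sum; auto).
  assert (B * INR N * d <= B * INR N * (eps / (2 * c)))
    by (apply Rmult_le_compat_l; [apply Rmult_le_pos |]; auto).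
  assert (B * INR N * (eps / (2 * c)) <= c * (eps / (2 * c)))
    by (apply Rmult_le_compat_r; [apply Rlt_le, Rdiv_lt_0_compat | unfold c]; lra).
  replace (c * (eps / (2 * c))) with (eps / 2) in * by (field; lra).
  replace (B * (INR N * d)) with (B * INR N * d) in * by ring. lra.
Qed.

End C2Box.

Lemma derivable_pt_lim_eps_delta (f : R -> R) x l eps :
  derivable_pt_lim f x l -> 0 < eps ->
  exists d, 0 < d /\ forall y, Rabs (y - x) < d -> Rabs (f y - f x) < eps.
Proof.
  intros Hf He. destruct (derivable_continuous_pt f x (exist _ l Hf) eps He) as [d [Hd H]].
  exists d; split; auto. intros y Hy. destruct (Req_dec y x) as [-> | Hne].
  - rewrite Rminus_diag, Rabs_R0; auto.
  - apply (H y). split; [split; [exact I | auto] | exact Hy].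
Qed.

Lemma quad_eps_delta al be ga s0 eps : 0 < eps -> exists d, 0 < d /\
  forall s, Rabs (s - s0) < d -> Rabs (quad al be ga s - quad al be ga s0) < eps.
Proof.
  apply derivable_pt_lim_eps_delta with (l := 2 * al * s0 + be).
  apply (derivable_pt_lim_quartic _ 0 0 al be ga); intros; unfold quad; ring.
Qed.

Lemma rsum_sq_eps_delta M o p eps : 0 < eps -> exists d, 0 < d /\ forall q,
  (forall j, (j < M)%nat -> Rabs (q (o + j)%nat - p (o + j)%nat) < d) ->
  Rabs (rsum M (fun j => q (o + j)%nat ^ 2) - rsum M (fun j => p (o + j)%nat ^ 2)) < eps.
Proof.
  revert eps. induction M; intros eps He.
  - exists 1; split; [lra |]. intros q _. simpl. rewrite Rminus_diag, Rabs_R0; auto.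
  - destruct (IHM (eps / 2) ltac:(lra)) as [d1 [Hd1 P1]].
    destruct (quad_eps_delta 1 0 0 (p (o + M)%nat) (eps / 2) ltac:(lra)) as [d2 [Hd2 P2]].
    exists (Rmin d1 d2). split; [apply Rmin_case; lra |]. intros q Hq.
    specialize (P1 q (fun j Hj => Rlt_le_trans _ _ _ (Hq j ltac:(lia)) (Rmin_l _ _))).
    specialize (P2 (q (o + M)%nat) (Rlt_le_trans _ _ _ (Hq M ltac:(lia)) (Rmin_r _ _))).
    unfold quad in P2. cbn [rsum].
    match goal with |- Rabs (?A + ?x - (?B + ?y)) < _ =>
      replace (A + x - (B + y)) with ((A - B) + (x - y)) by ring end.
    pose proof (Rabs_triang (rsum M (fun j => q (o + j)%nat ^ 2) - rsum M (fun j => p (o + j)%nat ^ 2))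
                            (q (o + M)%nat ^ 2 - p (o + M)%nat ^ 2)).
    replace (1 * q (o + M)%nat ^ 2 + 0 * q (o + M)%nat + 0 - (1 * p (o + M)%nat ^ 2 + 0 * p (o + M)%nat + 0))
      with (q (o + M)%nat ^ 2 - p (o + M)%nat ^ 2) in P2 by ring.
    lra.
Qed.

Lemma quotient_eps_delta a b eps : 0 < a -> 0 < eps -> exists d, 0 < d /\ forall x y,
  Rabs (x - a) < d -> Rabs (y - b) < d -> Rabs (y / x - b / a) < eps.
Proof.
  intros Ha He. set (c := a + Rabs b).
  assert (Hc : 0 < c) by (unfold c; pose proof (Rabs_pos b); lra).
  set (d := Rmin (a / 2) (eps * a * a / (4 * c))).
  assert (Hd1 : d <= a / 2) by apply Rmin_l.
  assert (Hd2 : d <= eps * a * a / (4 * c)) by apply Rmin_r.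
  assert (Hd : 0 < d).
  { apply Rmin_case; [lra |]. apply Rdiv_lt_0_compat; [| lra].
    apply Rmult_lt_0_compat; [nra | lra]. }
  exists d. split; auto. intros x y Hx Hy.
  assert (Hx2 : a / 2 < x) by (apply Rabs_def2 in Hx; lra).
  replace (y / x - b / a) with (((y - b) * a - b * (x - a)) / (x * a)) by (field; lra).
  unfold Rdiv. rewrite Rabs_mult, Rabs_inv, (Rabs_right (x * a)) by nra.
  assert (Hn : Rabs ((y - b) * a - b * (x - a)) <= d * c).
  { eapply Rle_trans; [apply Rabs_triang |]. rewrite Rabs_Ropp, !Rabs_mult, (Rabs_right a) by lra.
    pose proof (Rabs_pos b). unfold c. nra. }
  assert (Hxa : a * a / 2 < x * a) by nra.
  apply (Rmult_lt_reg_r (x * a)); [nra |]. rewrite Rmult_assoc, Rinv_l, Rmult_1_r by nra.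
  assert (d * c <= eps * a * a / 4).
  { replace (eps * a * a / 4) with (eps * a * a / (4 * c) * c) by (field; lra).
    apply Rmult_le_compat_r; lra. }
  nra.
Qed.

Lemma ysq_eps_delta k n p eps : (k <= n)%nat -> 0 < eps -> exists d, 0 < d /\ forall q,
  (forall l, (l < S n)%nat -> Rabs (q l - p l) < d) -> Rabs (ysq k q - ysq k p) < eps.
Proof.
  intros Hkn He. destruct (rsum_sq_eps_delta (S k) 0 p eps He) as [d [Hd P]].
  exists d; split; auto. intros q Hq. apply (P q). intros j Hj. apply Hq; simpl; lia.
Qed.

Lemma rsq_eps_delta k n p eps : 0 < eps -> exists d, 0 < d /\ forall q,
  (forall l, (l < S n)%nat -> Rabs (q l - p l) < d) -> Rabs (rsq k n q - rsq k n p) < eps.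
Proof.
  intros He. destruct (rsum_sq_eps_delta (n - k) (S k) p eps He) as [d [Hd P]].
  exists d; split; auto. intros q Hq. apply (P q). intros j Hj. apply Hq; lia.
Qed.

Lemma cylinder_margin k n p lo hi : (k <= n)%nat -> 0 < ysq k p -> lo < rsq k n p < hi ->
  exists r, 0 < r /\ forall z, (forall l, (l < S n)%nat -> Rabs (z l - p l) < r) ->
    0 < ysq k z /\ lo < rsq k n z < hi.
Proof.
  intros Hkn Hy Hx.
  destruct (ysq_eps_delta k n p (ysq k p) Hkn Hy) as [d1 [Hd1 P1]].
  destruct (rsq_eps_delta k n p (Rmin (rsq k n p - lo) (hi - rsq k n p))) as [d2 [Hd2 P2]].
  { apply Rmin_case; lra. }
  exists (Rmin d1 d2). split; [apply Rmin_case; lra |]. intros z Hz.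
  specialize (P1 z (fun l Hl => Rlt_le_trans _ _ _ (Hz l Hl) (Rmin_l _ _))).
  specialize (P2 z (fun l Hl => Rlt_le_trans _ _ _ (Hz l Hl) (Rmin_r _ _))).
  pose proof (Rmin_l (rsq k n p - lo) (hi - rsq k n p)).
  pose proof (Rmin_r (rsq k n p - lo) (hi - rsq k n p)).
  apply Rabs_def2 in P1. apply Rabs_def2 in P2. split; lra.
Qed.

Lemma stab_op_scale k n M F D1 D2 p :
  stab_op k n (fun q => M * F q) (fun i q => M * D1 i q) (fun i j q => M * D2 i j q) p =
  M * stab_op k n F D1 D2 p.
Proof.
  unfold stab_op. rewrite rsum_scal.
  rewrite (rsum_ext _ (fun i => p i * (M * D1 i p)) (fun i => M * (p i * D1 i p)))
    by (intros; ring).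
  rewrite rsum_scal. ring.
Qed.

Lemma stab_op_mono k n F G D1 D2 E1 E2 p :
  F p = G p -> (forall i, (i < S n)%nat -> D1 i p = E1 i p /\ D2 i i p <= E2 i i p) ->
  stab_op k n F D1 D2 p <= stab_op k n G E1 E2 p.
Proof.
  intros HF HD. unfold stab_op. rewrite HF.
  rewrite (rsum_ext _ (fun i => p i * D1 i p) (fun i => p i * E1 i p))
    by (intros i Hi; rewrite (proj1 (HD i Hi)); auto).
  assert (rsum (S n) (fun i => D2 i i p) <= rsum (S n) (fun i => E2 i i p))
    by (apply rsum_le; intros i Hi; apply HD; auto).
  lra.
Qed.

Lemma touching_partials N (G Phi : (nat -> R) -> R) (DG DPhi : nat -> (nat -> R) -> R)
  (D2G D2Phi : nat -> nat -> (nat -> R) -> R) c r :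
  0 < r -> Phi c = G c ->
  (forall z, (forall l, (l < N)%nat -> Rabs (z l - c l) < r) ->
     Phi z <= G z /\ forall i, (i < N)%nat ->
       derivable_pt_lim (fun t => G (upd z i t)) (z i) (DG i z) /\
       derivable_pt_lim (fun t => Phi (upd z i t)) (z i) (DPhi i z)) ->
  (forall i, (i < N)%nat ->
     derivable_pt_lim (fun t => DG i (upd c i t)) (c i) (D2G i i c) /\
     derivable_pt_lim (fun t => DPhi i (upd c i t)) (c i) (D2Phi i i c)) ->
  forall i, (i < N)%nat -> DPhi i c = DG i c /\ D2Phi i i c <= D2G i i c.
Proof.
  intros Hr Hc Hnear H2 i Hi.
  assert (Hline : forall t, Rabs (t - c i) < r ->
            forall l, (l < N)%nat -> Rabs (upd c i t l - c l) < r).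
  { intros t Ht l Hl. unfold upd. destruct (Nat.eqb_spec l i); [subst; auto |].
    rewrite Rminus_diag, Rabs_R0; lra. }
  destruct (H2 i Hi) as [HG2 HPhi2].
  destruct (local_min_derivatives (fun t => G (upd c i t) - Phi (upd c i t))
              (fun t => DG i (upd c i t) - DPhi i (upd c i t)) (c i) r
              (D2G i i c - D2Phi i i c)) as [G1 G2]; auto.
  - intros t Ht. destruct (Hnear _ (Hline t Ht)) as [Hle _]. lra.
  - rewrite upd_same, Hc. ring.
  - intros t Ht. destruct (Hnear _ (Hline t Ht)) as [_ Hd].
    destruct (Hd i Hi) as [HG HPhi]. rewrite upd_eq in HG, HPhi.
    apply derivable_pt_lim_minus; eapply derivable_pt_lim_ext;
      [| exact HG | | exact HPhi]; intros s; simpl; rewrite upd_upd; auto.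
  - apply derivable_pt_lim_minus; auto.
  - rewrite upd_same in G1. split; lra.
Qed.

Section RadialObstruction.

Variables (k n : nat) (Pr : R -> Prop) (al be ga a b e0 : R).
Hypothesis hk : (1 <= k)%nat.
Hypothesis hkn : (k < n)%nat.
Hypothesis He0 : 0 < e0.
Hypothesis HPr : forall s, a - e0 < s < b + e0 -> Pr (sqrt s).
Hypothesis Hbd : forall s, 0 <= s -> a <= s <= b -> 0 < quad al be ga s -> a < s < b.
Hypothesis HL : forall s, 0 <= s -> a < s < b -> 0 < radial_stab_op (INR (n - k)) al be ga s.
Hypothesis Hs0 : exists s, 0 <= s /\ a <= s <= b /\ 0 < quad al be ga s.

Definition region (p : nat -> R) : Prop := 0 < ysq k p /\ Pr (rflat k n p).

Definition shell (p : nat -> R) : Prop :=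
  ysq k p = 2 * INR k /\ (forall i, (n < i)%nat -> p i = 0) /\ a <= rsq k n p <= b.

Lemma shell_in_region p : shell p -> exists r, 0 < r /\ forall z, box (S n) p r z -> region z.
Proof.
  intros [Hy [_ Hx]]. assert (1 <= INR k) by (apply (le_INR 1); auto).
  destruct (cylinder_margin k n p (a - e0) (b + e0)) as [r [Hr Pr1]]; try lia; try lra.
  exists (r / 2). split; [lra |]. intros z [_ Hz].
  destruct (Pr1 z) as [A1 A2]; [intros l Hl; specialize (Hz l Hl); lra |].
  split; auto. rewrite rflat_rsq. apply HPr. lra.
Qed.

Lemma shell_bounded p : shell p -> forall i, (i < S n)%nat -> Rabs (p i) <= 2 * INR k + Rabs b + 1.
Proof.
  intros [Hy [_ Hx]] i Hi.
  assert (Hsq : p i ^ 2 <= 2 * INR k + Rabs b).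
  { pose proof (Rabs_pos b). pose proof (Rle_abs b). pose proof (pos_INR k).
    destruct (Nat.le_gt_cases i k).
    - assert (p i ^ 2 <= ysq k p)
        by (apply (rsum_term (S k) (fun i => p i ^ 2)); [intros; apply pow2_ge_0 | lia]).
      lra.
    - assert (p i ^ 2 <= rsq k n p).
      { unfold rsq. replace i with (S k + (i - S k))%nat at 1 by lia.
        apply (rsum_term (n - k) (fun j => p (S k + j)%nat ^ 2)); [intros; apply pow2_ge_0 | lia]. }
      lra. }
  assert (Rabs (p i) <= p i ^ 2 + 1) by (unfold Rabs; destruct (Rcase_abs (p i)); nra).
  lra.
Qed.

Lemma shell_closed p : (forall i, (S n <= i)%nat -> p i = 0) ->
  (forall eps, 0 < eps -> exists q, shell q /\
     forall i, (i < S n)%nat -> Rabs (q i - p i) < eps) ->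
  shell p.
Proof.
  intros Hz Happ.
  assert (Hrsq : forall eps, 0 < eps -> exists q, shell q /\ Rabs (rsq k n q - rsq k n p) < eps).
  { intros e He. destruct (rsq_eps_delta k n p e He) as [d [Hd Pd]].
    destruct (Happ d Hd) as [q [Kq Hqd]]. exists q; split; auto. }
  split; [| split; auto].
  - apply eq_sym, cond_eq. intros e He.
    destruct (ysq_eps_delta k n p e ltac:(lia) He) as [d [Hd Pd]].
    destruct (Happ d Hd) as [q [[Hq _] Hqd]].
    rewrite <- Hq. apply Pd. auto.
  - split; apply Rle_plus_epsilon; intros e He; destruct (Hrsq e He) as [q [[_ [_ Hq]] A]];
      apply Rabs_def2 in A; lra.
Qed.

Section Ratio.

Variables (u : (nat -> R) -> R) (D1 : nat -> (nat -> R) -> R) (D2 : nat -> nat -> (nat -> R) -> R).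
Hypothesis HC : is_C2_on (S n) region (ext k n u) D1 D2.
Hypothesis Hu : forall q, region q -> 0 < ext k n u q.

Definition ratio (p : nat -> R) : R := radial k n al be ga p / ext k n u p.

Lemma ratio_max : exists c, shell c /\ forall p, shell p -> ratio p <= ratio c.
Proof.
  apply (ExtremeValue.extreme_value_box n shell ratio (2 * INR k + Rabs b + 1)).
  - destruct Hs0 as [s [Hs [Hab _]]]. destruct (cyl_point_of_rsq k n s) as [p [Hp [Hz Hx]]]; auto.
    exists p. split; [exact Hp | split; auto; rewrite Hx; auto].
  - exact shell_bounded.
  - intros p [_ [Hz _]]; exact Hz.
  - exact shell_closed.
  - intros p Kp eps He.
    destruct (shell_in_region p Kp) as [r [Hr HUr]].
    assert (Fp : 0 < ext k n u p) by (apply Hu, HUr, box_center; lra).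
    destruct (quotient_eps_delta (ext k n u p) (radial k n al be ga p) eps Fp He) as [dq [Hdq Pq]].
    destruct (C2_continuous_box (S n) region (ext k n u) D1 D2 p r HC Hr HUr dq Hdq)
      as [dF [HdF PF]].
    destruct (quad_eps_delta al be ga (rsq k n p) dq Hdq) as [dh [Hdh Ph]].
    destruct (rsq_eps_delta k n p dh Hdh) as [dx [Hdx Px]].
    exists (Rmin dF dx). split; [apply Rmin_case; lra |].
    intros q Kq Hq. apply Pq.
    + apply PF. split.
      * intros l Hl. destruct Kq as [_ [Zq _]], Kp as [_ [Zp _]]. rewrite Zq, Zp by lia. auto.
      * intros l Hl. apply Rlt_le, (Rlt_le_trans _ _ _ (Hq l Hl)), Rmin_l.
    + apply Ph, Px. intros l Hl. apply (Rlt_le_trans _ _ _ (Hq l Hl)), Rmin_r.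
Qed.

(* At a maximum of the ratio over the shell, [radial] touches [M * ext u] from
   below on a whole neighbourhood, since both are constant along the spheres. *)
Lemma ratio_max_touches c : shell c -> (forall p, shell p -> ratio p <= ratio c) ->
  a < rsq k n c < b /\ exists r, 0 < r /\
    forall z, (forall l, (l < S n)%nat -> Rabs (z l - c l) < r) ->
      region z /\ radial k n al be ga z <= ratio c * ext k n u z.
Proof.
  intros Kc Hmax. pose proof Kc as [Hyc [Hzc Hxc]].
  assert (Hk : 0 < 2 * INR k) by (assert (1 <= INR k) by (apply (le_INR 1); auto); lra).
  assert (Uc : region c).
  { split; [lra |]. rewrite rflat_rsq. apply HPr. lra. }
  assert (Fc : 0 < ext k n u c) by auto.
  assert (Hpos : 0 < ratio c).
  { destruct Hs0 as [s [Hs [Hab Hq]]]. destruct (cyl_point_of_rsq k n s) as [p [Hp [Hz Hx]]]; auto.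
    assert (Kp : shell p) by (split; [exact Hp | split; auto; rewrite Hx; auto]).
    assert (Up : region p) by (split; [unfold on_cyl in Hp; lra | rewrite rflat_rsq; apply HPr; lra]).
    apply Rlt_le_trans with (ratio p); auto.
    apply Rdiv_lt_0_compat; auto. unfold radial. rewrite Hx. auto. }
  assert (Hxc2 : a < rsq k n c < b).
  { apply Hbd; [apply rsq_nonneg | auto |].
    replace (quad al be ga (rsq k n c)) with (ratio c * ext k n u c)
      by (unfold ratio, radial; field; lra).
    apply Rmult_lt_0_compat; auto. }
  split; auto.
  destruct (cylinder_margin k n c a b ltac:(lia) ltac:(lra) Hxc2) as [r [Hr Pr1]].
  exists r. split; auto. intros z Hz. destruct (Pr1 z Hz) as [Hyz Hxz].
  assert (Uz : region z) by (split; auto; rewrite rflat_rsq; apply HPr; lra).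
  split; auto.
  assert (Kz : shell (cyl_proj k n z)).
  { split; [apply ysq_cyl_proj; auto | split].
    - intros i Hi. unfold cyl_proj. destruct (Nat.leb_spec i k), (Nat.leb_spec i n); auto; lia.
    - rewrite rsq_cyl_proj. lra. }
  specialize (Hmax _ Kz). unfold ratio, radial in Hmax.
  rewrite rsq_cyl_proj, ext_cyl_proj_idem in Hmax by auto. fold (radial k n al be ga z) in Hmax.
  assert (Fz : 0 < ext k n u z) by auto.
  apply (Rmult_le_compat_r (ext k n u z)) in Hmax; [| lra].
  replace (radial k n al be ga z / ext k n u z * ext k n u z) with (radial k n al be ga z)
    in Hmax by (field; lra).
  exact Hmax.
Qed.

End Ratio.

Lemma radial_obstruction : ~ stable_region k n Pr.
Proof.
  intros [u [D1 [D2 [HC Hst]]]].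
  assert (Hu : forall q, region q -> 0 < ext k n u q).
  { intros q [Hy HP]. rewrite <- ext_cyl_proj_idem by auto.
    apply Hst; [apply ysq_cyl_proj; auto |]. rewrite rflat_rsq, rsq_cyl_proj. exact HP. }
  destruct (ratio_max u D1 D2 HC Hu) as [c [Kc Hmax]].
  destruct (ratio_max_touches u Hu c Kc Hmax) as [Hxc [r [Hr Hnear]]].
  set (M := ratio u c).
  assert (Uc : region c) by (apply Hnear; intros; rewrite Rminus_diag, Rabs_R0; auto).
  destruct HC as [HC1 [HC2 _]].
  assert (Htouch := touching_partials (S n) (fun q => M * ext k n u q) (radial k n al be ga)
    (fun i q => M * D1 i q) (radial_d1 k n al be) (fun i j q => M * D2 i j q) (radial_d2 k n al be)
    c r Hr).
  assert (Hle : stab_op k n (radial k n al be ga) (radial_d1 k n al be) (radial_d2 k n al be) c <=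
                stab_op k n (fun q => M * ext k n u q) (fun i q => M * D1 i q)
                  (fun i j q => M * D2 i j q) c).
  { apply stab_op_mono.
    - unfold M, ratio. field. apply Rgt_not_eq, Hu; auto.
    - apply Htouch.
      + unfold M, ratio. field. apply Rgt_not_eq, Hu; auto.
      + intros z Hz. destruct (Hnear z Hz) as [Uz Hle]. split; auto. intros i Hi.
        split; [apply derivable_pt_lim_scal, HC1 | apply radial_d1_spec]; auto.
      + intros i Hi. split; [apply derivable_pt_lim_scal, HC2 | apply radial_d2_spec]; auto. }
  rewrite stab_op_radial, stab_op_scale, (proj2 (Hst c (proj1 Kc) (proj2 Uc))) in Hle by lia.
  specialize (HL (rsq k n c) (rsq_nonneg k n c) Hxc). lra.
Qed.

End RadialObstruction.

(* [a] lies between [C^2] and the critical value, and [b] is taken so large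
   that [L] of the bump [-(|x|^2 - a)(|x|^2 - b)] is positive on the shell. *)
Lemma outer_region_unstable k n C : (1 <= k)%nat -> (k + 2 <= n)%nat -> 0 < C ->
  C ^ 2 < 2 * INR (n - k) -> ~ stable_region k n (fun r => r > C).
Proof.
  intros hk hkn HC HCm.
  set (m := 2 * INR (n - k)) in *.
  assert (Hm : 4 <= m) by (unfold m; assert (2 <= INR (n - k)) by (apply (le_INR 2); lia); lra).
  set (a := (C ^ 2 + m) / 2).
  assert (Ha : C ^ 2 < a < m) by (unfold a; lra).
  assert (HCa : 0 < C ^ 2) by nra.
  set (b := (4 + m) ^ 2 / (m - a) + a + 1).
  assert (Hq : 0 <= (4 + m) ^ 2 / (m - a))
    by (apply Rmult_le_pos; [apply pow2_ge_0 | left; apply Rinv_0_lt_compat; lra]).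
  assert (Hb1 : (4 + m) ^ 2 / (m - a) * (m - a) = (4 + m) ^ 2) by (field; lra).
  assert (Hab : a < b) by (unfold b; lra).
  apply (radial_obstruction k n _ (-1) (a + b) (- (a * b)) a b (a - C ^ 2)); try lia; try lra.
  - intros s Hs. unfold Rgt. rewrite <- (sqrt_pow2 C) by lra. apply sqrt_lt_1_alt. lra.
  - intros s _ Hs Hh. unfold quad in Hh.
    destruct (Req_dec s a) as [-> | Hna]; [nra |].
    destruct (Req_dec s b) as [-> | Hnb]; [nra | lra].
  - intros s _ Hs. unfold radial_stab_op, quad. fold m.
    assert (s ^ 2 - (8 + 2 * m) * s >= - (4 + m) ^ 2)
      by (assert (0 <= (s - (4 + m)) ^ 2) by apply pow2_ge_0; nra).
    assert (b * (m - a) > (4 + m) ^ 2).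
    { unfold b. replace (((4 + m) ^ 2 / (m - a) + a + 1) * (m - a)) with
        ((4 + m) ^ 2 / (m - a) * (m - a) + (a + 1) * (m - a)) by ring.
      rewrite Hb1. nra. }
    nra.
  - exists ((a + b) / 2). unfold quad. split; [lra | split; [split; lra | nra]].
Qed.

(* The subsolution is [c0 - |x|^2], with [c0] between the critical value and [C^2]. *)
Lemma inner_region_unstable k n C : (1 <= k)%nat -> (k < n)%nat -> 0 < C ->
  2 * INR (n - k) < C ^ 2 -> ~ stable_region k n (fun r => r < C).
Proof.
  intros hk hkn HC HCm.
  set (c0 := (2 * INR (n - k) + C ^ 2) / 2).
  assert (0 <= INR (n - k)) by apply pos_INR.
  apply (radial_obstruction k n _ 0 (-1) c0 (-1) c0 (C ^ 2 - c0)); auto; try (unfold c0; lra).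
  - intros s Hs. destruct (Rle_or_lt 0 s).
    + rewrite <- (sqrt_pow2 C) by lra. apply sqrt_lt_1_alt. lra.
    + rewrite sqrt_neg_0 by lra. auto.
  - intros s Hs0 Hs Hh. unfold quad in Hh. lra.
  - intros s _ Hs. unfold radial_stab_op, quad, c0. lra.
  - exists 0. unfold quad, c0. split; [lra | split; lra].
Qed.

Theorem proposition4p12 (k n : nat) (hk1 : (1 <= k)%nat) (hkn : (k <= n - 2)%nat) :
  stable_region k n (fun r => r < sqrt (2 * INR (n - k))) /\
  stable_region k n (fun r => r > sqrt (2 * INR (n - k))) /\
  (forall C : R, 0 < C ->
     stable_region k n (fun r => r < C) ->
     stable_region k n (fun r => r > C) ->
     C = sqrt (2 * INR (n - k))).
Proof.
  assert (Hm : 0 <= 2 * INR (n - k)) by (pose proof (pos_INR (n - k)); lra).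
  split; [| split].
  - apply (stable_region_affine k n (-1)); try lia.
    intros s _ Hs. apply sqrt_lt_0_alt in Hs. lra.
  - apply (stable_region_affine k n 1); try lia.
    intros s _ Hs. apply sqrt_lt_0_alt in Hs. lra.
  - intros C HC Hin Hout.
    destruct (Rtotal_order (C ^ 2) (2 * INR (n - k))) as [Hlt | [Heq | Hgt]].
    + exfalso. exact (outer_region_unstable k n C hk1 ltac:(lia) HC Hlt Hout).
    + rewrite <- Heq, sqrt_pow2; lra.
    + exfalso. exact (inner_region_unstable k n C hk1 ltac:(lia) HC Hgt Hin).
Qed.
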